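(* For any compact metric spaces $X$ and $Y$, $$d_{GH}\bigl(\mathcal{H}(X), \mathcal{H}(Y)\bigr) \le d_{GH}(X, Y).$$
   Context: For a metric space $W$, $\mathcal{H}(W)$ is the family of all nonempty bounded closed subsets of $W$ with the Hausdorff distance $|PQ|_W = \max\{\sup_{p\in P}\inf_{q\in Q}|pq|, \sup_{q\in Q}\inf_{p\in P}|pq|\}$; if $W$ is compact, so is $\mathcal{H}(W)$. $d_{GH}(X,Y)$ is the Gromov–Hausdorff distance: the infimum of $r$ such that there is a metric space $Z$ and subsets $X',Y'\subseteq Z$ isometric to $X,Y$ respectively with $|X'Y'|_Z \le r$. *)

From Stdlib Require Import Reals ClassicalEpsilon.
Open Scope R_scope.

Record MetricSpace := {
  carrier :> Type;
  mdist : carrier -> carrier -> R;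
  dist_nonneg : forall x y, 0 <= mdist x y;
  dist_eq0 : forall x y, mdist x y = 0 <-> x = y;
  dist_sym : forall x y, mdist x y = mdist y x;
  dist_tri : forall x y z, mdist x z <= mdist x y + mdist y z
}.

Definition is_glb (S : R -> Prop) (m : R) : Prop :=
  (forall x, S x -> m <= x) /\ (forall b, (forall x, S x -> b <= x) -> b <= m).

Definition compact_space (X : MetricSpace) : Prop :=
  forall u : nat -> X, exists (phi : nat -> nat) (l : X),
    (forall n m, (n < m)%nat -> (phi n < phi m)%nat) /\
    (forall eps, 0 < eps -> exists N, forall n, (N <= n)%nat -> mdist X (u (phi n)) l < eps).

Definition inf_dist_is (W : MetricSpace) (p : W) (Q : W -> Prop) (v : R) : Prop :=
  is_glb (fun y => exists q, Q q /\ y = mdist W p q) v.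

Definition hausdorff_is (W : MetricSpace) (P Q : W -> Prop) (h : R) : Prop :=
  exists a b,
    is_lub (fun x => exists p, P p /\ inf_dist_is W p Q x) a /\
    is_lub (fun x => exists q, Q q /\ inf_dist_is W q P x) b /\
    h = Rmax a b.

Definition closed_set (W : MetricSpace) (A : W -> Prop) : Prop :=
  forall x, (forall eps, 0 < eps -> exists a, A a /\ mdist W x a < eps) -> A x.
Definition bounded_set (W : MetricSpace) (A : W -> Prop) : Prop :=
  exists x0 r, forall a, A a -> mdist W x0 a <= r.
Definition nonempty_set (W : MetricSpace) (A : W -> Prop) : Prop :=
  exists a, A a.

Definition Hcarrier (W : MetricSpace) : Type :=
  { A : W -> Prop | nonempty_set W A /\ bounded_set W A /\ closed_set W A }.

(** The Hausdorff distance on H(W), as a function (chosen value of the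
    Hausdorff-distance relation, which exists and is unique on H(W)). *)
Definition Hdist (W : MetricSpace) (A B : Hcarrier W) : R :=
  epsilon (inhabits 0) (fun h => hausdorff_is W (proj1_sig A) (proj1_sig B) h).

Definition isometric_embedding {T : Type} (d : T -> T -> R) (Z : MetricSpace) (f : T -> Z) : Prop :=
  forall x y, mdist Z (f x) (f y) = d x y.

Definition image {T : Type} {Z : Type} (f : T -> Z) : Z -> Prop :=
  fun z => exists x, z = f x.

Definition GH_dist_is {T1 T2 : Type} (d1 : T1 -> T1 -> R) (d2 : T2 -> T2 -> R) (g : R) : Prop :=
  is_glb (fun r => exists (Z : MetricSpace) (f : T1 -> Z) (f' : T2 -> Z),
             isometric_embedding d1 Z f /\ isometric_embedding d2 Z f' /\
             exists h, hausdorff_is Z (image f) (image f') h /\ h <= r) g.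

(* Let X and Y sit isometrically in Z at Hausdorff distance h. Isometric embeddings preserve
   Hausdorff distances, so A |-> f(A) and B |-> f'(B) embed H(X) and H(Y) isometrically into the
   bounded subsets of Z; gluing H(X) and H(Y) along the cross distances d_H(f(A), f'(B)) + delta
   gives a metric space containing both. For t > h, every A is within t of the closed bounded set
   of points of Y whose images are t-close to f(A), and symmetrically, so in the glued space the
   two hyperspaces are at Hausdorff distance at most t + delta. Compactness is only used to make
   X and Y bounded, so that some realization of them exists at all. *)

From Pilot Require Import Defs.
From Stdlib Require Import Reals Lra Lia Classical ClassicalEpsilon
  FunctionalExtensionality PropExtensionality ProofIrrelevance.
Open Scope R_scope.

Lemma glb_exists (S : R -> Prop) (m : R) :
  (exists x, S x) -> (forall x, S x -> m <= x) -> exists g, is_glb S g.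
Proof.
  intros [x0 Hx0] Hlb.
  destruct (completeness (fun y => S (- y))) as [l [Hub Hl]].
  - exists (- m). intros y Hy. specialize (Hlb _ Hy). lra.
  - exists (- x0). now rewrite Ropp_involutive.
  - exists (- l). split.
    + intros x Hx. assert (- x <= l) by (apply Hub; now rewrite Ropp_involutive). lra.
    + intros b Hb. assert (l <= - b) by (apply Hl; intros y Hy; specialize (Hb _ Hy); lra).
      lra.
Qed.

Lemma is_lub_inhabited (S : R -> Prop) (m : R) : is_lub S m -> exists x, S x.
Proof.
  intros [_ Hl]. apply NNPP. intro Hempty.
  assert (m <= m - 1) by (apply Hl; intros x Hx; exfalso; eauto). lra.
Qed.

Lemma mdist_self (W : MetricSpace) (w : W) : mdist W w w = 0.
Proof. now apply dist_eq0. Qed.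

Section Hausdorff.
Variable W : MetricSpace.
Implicit Types (P Q S : W -> Prop) (p q : W).

(* Relational form of d_H(P, Q) <= t, usable before d_H(P, Q) is known to exist. *)
Definition hausdorff_within P Q (t : R) : Prop :=
  (forall p, P p -> forall e, 0 < e -> exists q, Q q /\ mdist W p q <= t + e) /\
  (forall q, Q q -> forall e, 0 < e -> exists p, P p /\ mdist W q p <= t + e).

Lemma hausdorff_within_sym P Q t : hausdorff_within P Q t -> hausdorff_within Q P t.
Proof. now intros [H1 H2]. Qed.

Lemma hausdorff_within_refl P : hausdorff_within P P 0.
Proof. split; intros p Hp e He; exists p; rewrite mdist_self; split; auto; lra. Qed.

Lemma hausdorff_within_trans P Q S s t :
  hausdorff_within P Q s -> hausdorff_within Q S t -> hausdorff_within P S (s + t).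
Proof.
  intros [PQ QP] [QS SQ]. split.
  - intros p Hp e He.
    destruct (PQ p Hp (e / 2)) as [q [Hq Hpq]]; [lra|].
    destruct (QS q Hq (e / 2)) as [x [Hx Hqx]]; [lra|].
    exists x. split; auto. pose proof (Defs.dist_tri W p q x). lra.
  - intros x Hx e He.
    destruct (SQ x Hx (e / 2)) as [q [Hq Hxq]]; [lra|].
    destruct (QP q Hq (e / 2)) as [p [Hp Hqp]]; [lra|].
    exists p. split; auto. pose proof (Defs.dist_tri W x q p). lra.
Qed.

Lemma hausdorff_within_of_bound P Q M :
  nonempty_set W P -> nonempty_set W Q ->
  (forall p q, P p -> Q q -> mdist W p q <= M) -> hausdorff_within P Q M.
Proof.
  intros [p0 Hp0] [q0 Hq0] HM. split.
  - intros p Hp e He. exists q0. specialize (HM p q0 Hp Hq0). split; auto; lra.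
  - intros q Hq e He. exists p0. specialize (HM p0 q Hp0 Hq).
    rewrite Defs.dist_sym. split; auto; lra.
Qed.

Lemma inf_dist_exists p Q : nonempty_set W Q -> exists v, inf_dist_is W p Q v.
Proof.
  intros [q0 Hq0]. apply (glb_exists _ 0).
  - exists (mdist W p q0). eauto.
  - intros x [q [_ ->]]. apply dist_nonneg.
Qed.

Lemma inf_dist_near p Q v e :
  inf_dist_is W p Q v -> 0 < e -> exists q, Q q /\ mdist W p q <= v + e.
Proof.
  intros [_ Hgl] He. apply NNPP. intro Hfar.
  assert (v + e <= v); [|lra].
  apply Hgl. intros x [q [Hq ->]]. apply Rnot_lt_le. intro Hlt.
  apply Hfar. exists q. split; auto. lra.
Qed.

Lemma hausdorff_is_nonempty P Q h :
  hausdorff_is W P Q h -> nonempty_set W P /\ nonempty_set W Q.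
Proof.
  intros [a [b [Ha [Hb _]]]].
  destruct (is_lub_inhabited _ _ Ha) as [_ [p [Hp _]]].
  destruct (is_lub_inhabited _ _ Hb) as [_ [q [Hq _]]].
  split; [exists p | exists q]; auto.
Qed.

Lemma hausdorff_is_within P Q h : hausdorff_is W P Q h -> hausdorff_within P Q h.
Proof.
  intros Hh. destruct (hausdorff_is_nonempty P Q h Hh) as [HP HQ].
  destruct Hh as [a [b [Ha [Hb ->]]]]. split.
  - intros p Hp e He.
    destruct (inf_dist_exists p Q HQ) as [v Hv].
    destruct (inf_dist_near p Q v e Hv He) as [q [Hq Hpq]].
    exists q. split; auto.
    assert (v <= a) by (apply (proj1 Ha); eauto). pose proof (Rmax_l a b). lra.
  - intros q Hq e He.
    destruct (inf_dist_exists q P HP) as [v Hv].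
    destruct (inf_dist_near q P v e Hv He) as [p [Hp Hqp]].
    exists p. split; auto.
    assert (v <= b) by (apply (proj1 Hb); eauto). pose proof (Rmax_r a b). lra.
Qed.

Lemma inf_dist_le_within p Q v t :
  inf_dist_is W p Q v ->
  (forall e, 0 < e -> exists q, Q q /\ mdist W p q <= t + e) -> v <= t.
Proof.
  intros [Hlb _] Hnear. apply Rle_plus_epsilon. intros e He.
  destruct (Hnear e He) as [q [Hq Hpq]].
  apply Rle_trans with (mdist W p q); auto. apply Hlb. eauto.
Qed.

Lemma hausdorff_is_le P Q h t : hausdorff_is W P Q h -> hausdorff_within P Q t -> h <= t.
Proof.
  intros [a [b [Ha [Hb ->]]]] [PQ QP]. apply Rmax_lub.
  - apply (proj2 Ha). intros x [p [Hp Hx]]. eapply inf_dist_le_within; eauto.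
  - apply (proj2 Hb). intros x [q [Hq Hx]]. eapply inf_dist_le_within; eauto.
Qed.

Lemma hausdorff_is_exists_le P Q t :
  nonempty_set W P -> nonempty_set W Q -> hausdorff_within P Q t ->
  exists h, hausdorff_is W P Q h /\ h <= t.
Proof.
  intros [p0 Hp0] [q0 Hq0] [PQ QP].
  destruct (completeness (fun x => exists p, P p /\ inf_dist_is W p Q x)) as [a Ha].
  { exists t. intros x [p [Hp Hx]]. eapply inf_dist_le_within; eauto. }
  { destruct (inf_dist_exists p0 Q (ex_intro _ q0 Hq0)) as [v Hv]. eauto. }
  destruct (completeness (fun x => exists q, Q q /\ inf_dist_is W q P x)) as [b Hb].
  { exists t. intros x [q [Hq Hx]]. eapply inf_dist_le_within; eauto. }
  { destruct (inf_dist_exists q0 P (ex_intro _ p0 Hp0)) as [v Hv]. eauto. }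
  assert (Hh : hausdorff_is W P Q (Rmax a b)) by (exists a, b; auto).
  exists (Rmax a b). split; auto.
  apply (hausdorff_is_le P Q); auto. split; auto.
Qed.

Lemma hausdorff_is_nonneg P Q h : hausdorff_is W P Q h -> 0 <= h.
Proof.
  intros Hh. destruct (hausdorff_is_nonempty P Q h Hh) as [[p Hp] _].
  destruct (hausdorff_is_within P Q h Hh) as [PQ _].
  apply Rle_plus_epsilon. intros e He.
  destruct (PQ p Hp e He) as [q [_ Hpq]]. pose proof (dist_nonneg W p q). lra.
Qed.

Lemma hausdorff_is_sym P Q h : hausdorff_is W P Q h -> hausdorff_is W Q P h.
Proof. intros [a [b [Ha [Hb ->]]]]. exists b, a. rewrite Rmax_comm. auto. Qed.

Lemma hausdorff_is_unique P Q h h' : hausdorff_is W P Q h -> hausdorff_is W P Q h' -> h = h'.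
Proof.
  intros Hh Hh'. apply Rle_antisym; eapply hausdorff_is_le; eauto;
  eapply hausdorff_is_within; eauto.
Qed.

Definition bounded_nonempty P : Prop := nonempty_set W P /\ bounded_set W P.

Lemma hausdorff_is_exists P Q :
  bounded_nonempty P -> bounded_nonempty Q -> exists h, hausdorff_is W P Q h.
Proof.
  intros [HP [cP [rP HrP]]] [HQ [cQ [rQ HrQ]]].
  destruct (hausdorff_is_exists_le P Q (rP + mdist W cP cQ + rQ)) as [h [Hh _]]; auto.
  - apply hausdorff_within_of_bound; auto. intros p q Hp Hq.
    pose proof (HrP p Hp). pose proof (HrQ q Hq).
    pose proof (Defs.dist_tri W p cP q). pose proof (Defs.dist_tri W cP cQ q).
    rewrite (Defs.dist_sym W p cP) in *. lra.
  - eauto.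
Qed.

Definition hdist P Q : R := epsilon (inhabits 0) (fun h => hausdorff_is W P Q h).

Lemma hdist_spec P Q :
  bounded_nonempty P -> bounded_nonempty Q -> hausdorff_is W P Q (hdist P Q).
Proof. intros HP HQ. unfold hdist. apply epsilon_spec. now apply hausdorff_is_exists. Qed.

Section BoundedSets.
Variables P Q S : W -> Prop.
Hypotheses (HP : bounded_nonempty P) (HQ : bounded_nonempty Q) (HS : bounded_nonempty S).

Lemma hdist_nonneg : 0 <= hdist P Q.
Proof. exact (hausdorff_is_nonneg _ _ _ (hdist_spec P Q HP HQ)). Qed.

Lemma hdist_sym : hdist P Q = hdist Q P.
Proof.
  apply (hausdorff_is_unique Q P); [apply hausdorff_is_sym|]; now apply hdist_spec.
Qed.

Lemma hdist_triangle : hdist P S <= hdist P Q + hdist Q S.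
Proof.
  apply (hausdorff_is_le P S); [now apply hdist_spec|].
  apply hausdorff_within_trans with Q; apply hausdorff_is_within; now apply hdist_spec.
Qed.

Lemma hdist_le t : hausdorff_within P Q t -> hdist P Q <= t.
Proof. apply hausdorff_is_le. now apply hdist_spec. Qed.

Lemma hdist_within : hausdorff_within P Q (hdist P Q).
Proof. apply hausdorff_is_within. now apply hdist_spec. Qed.

End BoundedSets.

End Hausdorff.
Definition set_image {X Z : MetricSpace} (f : X -> Z) (P : X -> Prop) : Z -> Prop :=
  fun z => exists x, P x /\ z = f x.

Section IsometricImage.
Variables (X Z : MetricSpace) (f : X -> Z).
Hypothesis hf : isometric_embedding (mdist X) Z f.

Lemma hausdorff_within_image P Q t :
  hausdorff_within X P Q t <-> hausdorff_within Z (set_image f P) (set_image f Q) t.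
Proof.
  split.
  - intros [PQ QP]. split.
    + intros _ [p [Hp ->]] e He. destruct (PQ p Hp e He) as [q [Hq Hpq]].
      exists (f q). rewrite hf. split; auto. now exists q.
    + intros _ [q [Hq ->]] e He. destruct (QP q Hq e He) as [p [Hp Hqp]].
      exists (f p). rewrite hf. split; auto. now exists p.
  - intros [PQ QP]. split.
    + intros p Hp e He.
      destruct (PQ (f p) (ex_intro _ p (conj Hp eq_refl)) e He) as [_ [[q [Hq ->]] Hpq]].
      exists q. rewrite hf in Hpq. auto.
    + intros q Hq e He.
      destruct (QP (f q) (ex_intro _ q (conj Hq eq_refl)) e He) as [_ [[p [Hp ->]] Hqp]].
      exists p. rewrite hf in Hqp. auto.
Qed.

Lemma set_image_bounded_nonempty P :
  bounded_nonempty X P -> bounded_nonempty Z (set_image f P).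
Proof.
  intros [[p Hp] [c [r Hr]]]. split.
  - exists (f p), p. auto.
  - exists (f c), r. intros _ [x [Hx ->]]. rewrite hf. auto.
Qed.

Lemma hdist_image P Q :
  bounded_nonempty X P -> bounded_nonempty X Q ->
  hdist Z (set_image f P) (set_image f Q) = hdist X P Q.
Proof.
  intros HP HQ.
  pose proof (set_image_bounded_nonempty P HP). pose proof (set_image_bounded_nonempty Q HQ).
  apply Rle_antisym; apply hdist_le; auto; [apply hausdorff_within_image|];
    [|apply <- hausdorff_within_image]; apply hdist_within; auto.
Qed.

Lemma bounded_of_isometric_image (B : X -> Prop) (z : Z) (s : R) :
  nonempty_set X B -> (forall x, B x -> mdist Z z (f x) <= s) -> bounded_set X B.
Proof.
  intros [x0 Hx0] Hs. exists x0, (2 * s). intros x Hx.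
  rewrite <- hf. pose proof (Defs.dist_tri Z (f x0) z (f x)).
  rewrite (Defs.dist_sym Z (f x0) z) in *. pose proof (Hs x0 Hx0). pose proof (Hs x Hx). lra.
Qed.

End IsometricImage.

Section Hyperspace.
Variable W : MetricSpace.

Lemma Hcarrier_bounded_nonempty (A : Hcarrier W) : bounded_nonempty W (proj1_sig A).
Proof. destruct (proj2_sig A) as [HA [HB _]]. now split. Qed.

Lemma Hcarrier_ext (A B : Hcarrier W) : (forall x, proj1_sig A x <-> proj1_sig B x) -> A = B.
Proof.
  destruct A as [P HP], B as [Q HQ]. simpl. intros HPQ.
  assert (P = Q) as ->.
  { apply functional_extensionality. intro x. now apply propositional_extensionality. }
  f_equal. apply proof_irrelevance.
Qed.

Lemma Hdist_nonneg (A B : Hcarrier W) : 0 <= Hdist W A B.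
Proof. apply hdist_nonneg; apply Hcarrier_bounded_nonempty. Qed.

Lemma Hdist_sym (A B : Hcarrier W) : Hdist W A B = Hdist W B A.
Proof. apply hdist_sym; apply Hcarrier_bounded_nonempty. Qed.

Lemma Hdist_triangle (A B C : Hcarrier W) : Hdist W A C <= Hdist W A B + Hdist W B C.
Proof. apply hdist_triangle; apply Hcarrier_bounded_nonempty. Qed.

(* Points at Hausdorff distance 0 from a closed set belong to it. *)
Lemma Hdist_eq0 (A B : Hcarrier W) : Hdist W A B = 0 <-> A = B.
Proof.
  split; [|intros <-; apply Rle_antisym; [|apply Hdist_nonneg];
           apply hdist_le; try apply Hcarrier_bounded_nonempty; apply hausdorff_within_refl].
  intros H0.
  destruct (hdist_within W (proj1_sig A) (proj1_sig B)) as [AB BA];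
    try apply Hcarrier_bounded_nonempty.
  change (hdist W (proj1_sig A) (proj1_sig B)) with (Hdist W A B) in AB, BA.
  rewrite H0 in AB, BA.
  apply Hcarrier_ext. intro x. split; intro Hx.
  - apply (proj2 (proj2 (proj2_sig B))). intros e He.
    destruct (AB x Hx (e / 2)) as [y [Hy Hxy]]; [lra|]. exists y. split; auto. lra.
  - apply (proj2 (proj2 (proj2_sig A))). intros e He.
    destruct (BA x Hx (e / 2)) as [y [Hy Hxy]]; [lra|]. exists y. split; auto. lra.
Qed.

Definition Hspace : MetricSpace :=
  Build_MetricSpace (Hcarrier W) (Hdist W) Hdist_nonneg Hdist_eq0 Hdist_sym Hdist_triangle.

Definition Hsingleton (w : W) : Hcarrier W.
Proof.
  exists (fun x => x = w). split; [|split].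
  - now exists w.
  - exists w, 0. intros a ->. rewrite mdist_self. lra.
  - intros x Hx. apply dist_eq0. apply Rle_antisym; [|apply dist_nonneg].
    apply Rle_plus_epsilon. intros e He. destruct (Hx e He) as [a [-> Ha]]. lra.
Defined.

End Hyperspace.
Section SumMetric.
Variables (A B : MetricSpace) (c : A -> B -> R).
Hypotheses
  (c_pos : forall a b, 0 < c a b)
  (c_left : forall a a' b, c a b <= mdist A a a' + c a' b)
  (c_right : forall a b b', c a b <= c a b' + mdist B b' b)
  (mdist_left : forall a a' b, mdist A a a' <= c a b + c a' b)
  (mdist_right : forall a b b', mdist B b b' <= c a b + c a b').

Definition sum_dist (u v : A + B) : R :=
  match u, v with
  | inl a, inl a' => mdist A a a'
  | inr b, inr b' => mdist B b b'
  | inl a, inr b | inr b, inl a => c a b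
  end.

Lemma sum_dist_nonneg u v : 0 <= sum_dist u v.
Proof. destruct u, v; simpl; try apply dist_nonneg; apply Rlt_le, c_pos. Qed.

Lemma sum_dist_eq0 u v : sum_dist u v = 0 <-> u = v.
Proof.
  destruct u as [a|b], v as [a'|b']; simpl.
  - rewrite dist_eq0. split; congruence.
  - pose proof (c_pos a b'). split; [lra | discriminate].
  - pose proof (c_pos a' b). split; [lra | discriminate].
  - rewrite dist_eq0. split; congruence.
Qed.

Lemma sum_dist_sym u v : sum_dist u v = sum_dist v u.
Proof. destruct u, v; simpl; auto; apply Defs.dist_sym. Qed.

Lemma sum_dist_triangle u v w : sum_dist u w <= sum_dist u v + sum_dist v w.
Proof.
  destruct u as [a|b], v as [a'|b'], w as [a''|b'']; simpl;
    try apply Defs.dist_tri; auto.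
  - rewrite Rplus_comm, (Defs.dist_sym A a' a''). apply c_left.
  - rewrite Rplus_comm, (Defs.dist_sym B b b'). apply c_right.
Qed.

Definition sum_metric : MetricSpace :=
  Build_MetricSpace (A + B) sum_dist sum_dist_nonneg sum_dist_eq0 sum_dist_sym
    sum_dist_triangle.

Lemma sum_metric_hausdorff (a0 : A) t :
  (forall a, exists b, c a b <= t) -> (forall b, exists a, c a b <= t) ->
  exists h, hausdorff_is sum_metric (image inl) (image inr) h /\ h <= t.
Proof.
  intros Hab Hba. destruct (Hab a0) as [b0 _].
  apply hausdorff_is_exists_le; [exists (inl a0), a0; auto | exists (inr b0), b0; auto |].
  split.
  - intros _ [a ->] e He. destruct (Hab a) as [b Hb].
    exists (inr b). split; [now exists b | simpl; lra].
  - intros _ [b ->] e He. destruct (Hba b) as [a Ha].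
    exists (inl a). split; [now exists a | simpl; lra].
Qed.

End SumMetric.
Definition GH_admissible {T1 T2 : Type} (d1 : T1 -> T1 -> R) (d2 : T2 -> T2 -> R) (r : R) :
  Prop :=
  exists (Z : MetricSpace) (f : T1 -> Z) (f' : T2 -> Z),
    isometric_embedding d1 Z f /\ isometric_embedding d2 Z f' /\
    exists h, hausdorff_is Z (image f) (image f') h /\ h <= r.

Lemma GH_dist_exists {T1 T2 : Type} (d1 : T1 -> T1 -> R) (d2 : T2 -> T2 -> R) r :
  GH_admissible d1 d2 r -> exists g, GH_dist_is d1 d2 g.
Proof.
  intros Hr. apply (glb_exists _ 0); [now exists r|].
  intros s [Z [f [f' [_ [_ [h [Hh Hs]]]]]]]. pose proof (hausdorff_is_nonneg _ _ _ _ Hh). lra.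
Qed.

Lemma GH_dist_le {T1 T2 U1 U2 : Type} (d1 : T1 -> T1 -> R) (d2 : T2 -> T2 -> R)
  (d1' : U1 -> U1 -> R) (d2' : U2 -> U2 -> R) g g' :
  (forall r e, GH_admissible d1 d2 r -> 0 < e -> GH_admissible d1' d2' (r + e)) ->
  GH_dist_is d1' d2' g' -> GH_dist_is d1 d2 g -> g' <= g.
Proof.
  intros Hadm Hg' Hg. apply (proj2 Hg). intros r Hr.
  apply Rle_plus_epsilon. intros e He. apply (proj1 Hg'). now apply Hadm.
Qed.

(* The partner of [A] is the closed set of points of [Y] whose images are [t]-close to [f(A)]. *)
Lemma hyperspace_partner (X Y Z : MetricSpace) (f : X -> Z) (f' : Y -> Z) (t : R) :
  isometric_embedding (mdist X) Z f -> isometric_embedding (mdist Y) Z f' ->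
  (forall x, exists y, mdist Z (f x) (f' y) <= t) ->
  forall A : Hcarrier X, exists B : Hcarrier Y,
    hausdorff_within Z (set_image f (proj1_sig A)) (set_image f' (proj1_sig B)) t.
Proof.
  intros hf hf' Hnear A.
  destruct (Hcarrier_bounded_nonempty X A) as [[a0 Ha0] [c [r Hr]]].
  set (PB := fun y => forall e, 0 < e ->
               exists a, proj1_sig A a /\ mdist Z (f a) (f' y) <= t + e).
  assert (HPB : nonempty_set Y PB /\ bounded_set Y PB /\ Defs.closed_set Y PB).
  { destruct (Hnear a0) as [y0 Hy0].
    assert (Hne : nonempty_set Y PB) by (exists y0; intros e He; exists a0; split; auto; lra).
    split; [|split]; auto.
    - apply (bounded_of_isometric_image Y Z f' hf' PB (f c) (r + (t + 1))); auto.
      intros y Hy. destruct (Hy 1 Rlt_0_1) as [a [Ha Hay]].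
      pose proof (Defs.dist_tri Z (f c) (f a) (f' y)). rewrite hf in *.
      pose proof (Hr a Ha). lra.
    - intros y Hy e He.
      destruct (Hy (e / 2)) as [b [Hb Hyb]]; [lra|].
      destruct (Hb (e / 2)) as [a [Ha Hab]]; [lra|].
      exists a. split; auto.
      pose proof (Defs.dist_tri Z (f a) (f' b) (f' y)).
      rewrite hf', (Defs.dist_sym Y b y) in *. lra. }
  exists (exist _ PB HPB). split.
  - intros _ [a [Ha ->]] e He. destruct (Hnear a) as [y Hy].
    exists (f' y). split; [|lra].
    exists y. split; auto. intros e' He'. exists a. split; auto. lra.
  - intros _ [y [Hy ->]] e He. destruct (Hy e He) as [a [Ha Hay]].
    exists (f a). rewrite Defs.dist_sym. split; auto. now exists a.
Qed.

Section HyperspaceGluing.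
Variables (X Y Z : MetricSpace) (f : X -> Z) (f' : Y -> Z) (delta : R).
Hypotheses (hf : isometric_embedding (mdist X) Z f) (hf' : isometric_embedding (mdist Y) Z f')
  (delta_pos : 0 < delta).

Lemma image_Hcarrier_l (A : Hcarrier X) : bounded_nonempty Z (set_image f (proj1_sig A)).
Proof. apply set_image_bounded_nonempty; auto. apply Hcarrier_bounded_nonempty. Qed.

Lemma image_Hcarrier_r (B : Hcarrier Y) : bounded_nonempty Z (set_image f' (proj1_sig B)).
Proof. apply set_image_bounded_nonempty; auto. apply Hcarrier_bounded_nonempty. Qed.

(* [delta] keeps [inl A] and [inr B] apart even when [f(A) = f'(B)]. *)
Definition hcross (A : Hcarrier X) (B : Hcarrier Y) : R :=
  hdist Z (set_image f (proj1_sig A)) (set_image f' (proj1_sig B)) + delta.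

Lemma hdist_image_l (A A' : Hcarrier X) :
  hdist Z (set_image f (proj1_sig A)) (set_image f (proj1_sig A')) = Hdist X A A'.
Proof. apply hdist_image; auto; apply Hcarrier_bounded_nonempty. Qed.

Lemma hdist_image_r (B B' : Hcarrier Y) :
  hdist Z (set_image f' (proj1_sig B)) (set_image f' (proj1_sig B')) = Hdist Y B B'.
Proof. apply hdist_image; auto; apply Hcarrier_bounded_nonempty. Qed.

Lemma hcross_pos A B : 0 < hcross A B.
Proof.
  pose proof (hdist_nonneg Z _ _ (image_Hcarrier_l A) (image_Hcarrier_r B)).
  unfold hcross. lra.
Qed.

Lemma hcross_le_l A A' B : hcross A B <= Hdist X A A' + hcross A' B.
Proof.
  unfold hcross. rewrite <- hdist_image_l.
  pose proof (hdist_triangle Z _ _ _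
                (image_Hcarrier_l A) (image_Hcarrier_l A') (image_Hcarrier_r B)).
  lra.
Qed.

Lemma hcross_le_r A B B' : hcross A B <= hcross A B' + Hdist Y B' B.
Proof.
  unfold hcross. rewrite <- hdist_image_r.
  pose proof (hdist_triangle Z _ _ _
                (image_Hcarrier_l A) (image_Hcarrier_r B') (image_Hcarrier_r B)).
  lra.
Qed.

Lemma Hdist_le_hcross_l A A' B : Hdist X A A' <= hcross A B + hcross A' B.
Proof.
  unfold hcross. rewrite <- hdist_image_l.
  rewrite (hdist_sym Z _ _ (image_Hcarrier_l A') (image_Hcarrier_r B)).
  pose proof (hdist_triangle Z _ _ _
                (image_Hcarrier_l A) (image_Hcarrier_r B) (image_Hcarrier_l A')).
  lra.
Qed.

Lemma Hdist_le_hcross_r A B B' : Hdist Y B B' <= hcross A B + hcross A B'.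
Proof.
  unfold hcross. rewrite <- hdist_image_r.
  rewrite (hdist_sym Z _ _ (image_Hcarrier_l A) (image_Hcarrier_r B)).
  pose proof (hdist_triangle Z _ _ _
                (image_Hcarrier_r B) (image_Hcarrier_l A) (image_Hcarrier_r B')).
  lra.
Qed.

Definition hyperspace_gluing : MetricSpace :=
  sum_metric (Hspace X) (Hspace Y) hcross hcross_pos hcross_le_l hcross_le_r
    Hdist_le_hcross_l Hdist_le_hcross_r.

Lemma hyperspace_gluing_hausdorff (x0 : X) t :
  (forall x, exists y, mdist Z (f x) (f' y) <= t) ->
  (forall y, exists x, mdist Z (f' y) (f x) <= t) ->
  exists h, hausdorff_is hyperspace_gluing (image inl) (image inr) h /\ h <= t + delta.
Proof.
  intros HXY HYX.
  apply (sum_metric_hausdorff (Hspace X) (Hspace Y) hcross _ _ _ _ _ (Hsingleton X x0)).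
  - intros A. destruct (hyperspace_partner X Y Z f f' t hf hf' HXY A) as [B HB].
    exists B. pose proof (hdist_le Z _ _ (image_Hcarrier_l A) (image_Hcarrier_r B) _ HB).
    unfold hcross. lra.
  - intros B. destruct (hyperspace_partner Y X Z f' f t hf' hf HYX B) as [A HA].
    apply hausdorff_within_sym in HA. exists A.
    pose proof (hdist_le Z _ _ (image_Hcarrier_l A) (image_Hcarrier_r B) _ HA).
    unfold hcross. lra.
Qed.

End HyperspaceGluing.

Lemma GH_admissible_hyperspace (X Y : MetricSpace) r e :
  GH_admissible (mdist X) (mdist Y) r -> 0 < e -> GH_admissible (Hdist X) (Hdist Y) (r + e).
Proof.
  intros [Z [f [f' [hf [hf' [h [Hh Hhr]]]]]]] He.
  destruct (hausdorff_is_nonempty _ _ _ _ Hh) as [[_ [x0 _]] _].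
  destruct (hausdorff_is_within _ _ _ _ Hh) as [XY YX].
  assert (HXY : forall x, exists y, mdist Z (f x) (f' y) <= h + e / 2).
  { intro x. destruct (XY (f x) (ex_intro _ x eq_refl) (e / 2)) as [_ [[y ->] Hy]];
      eauto; lra. }
  assert (HYX : forall y, exists x, mdist Z (f' y) (f x) <= h + e / 2).
  { intro y. destruct (YX (f' y) (ex_intro _ y eq_refl) (e / 2)) as [_ [[x ->] Hx]];
      eauto; lra. }
  assert (He2 : 0 < e / 2) by lra.
  exists (hyperspace_gluing X Y Z f f' (e / 2) hf hf' He2), inl, inr.
  split; [intros ? ?; reflexivity | split; [intros ? ?; reflexivity |]].
  destruct (hyperspace_gluing_hausdorff X Y Z f f' (e / 2) hf hf' He2 x0 (h + e / 2))
    as [h' [Hh' Hle]]; auto.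
  exists h'. split; auto. lra.
Qed.

Lemma strictly_increasing_ge (phi : nat -> nat) :
  (forall n m, (n < m)%nat -> (phi n < phi m)%nat) -> forall n, (n <= phi n)%nat.
Proof. intros Hphi n. induction n; [lia|]. specialize (Hphi n (S n) ltac:(lia)). lia. Qed.

(* An unbounded sequence has no convergent subsequence. *)
Lemma compact_bounded (X : MetricSpace) (x0 : X) :
  compact_space X -> exists M, forall x, mdist X x0 x <= M.
Proof.
  intros hX. apply NNPP. intro Hunb.
  assert (Hfar : forall n : nat, exists x, INR n < mdist X x0 x).
  { intro n. apply NNPP. intro Hn. apply Hunb. exists (INR n). intro x.
    apply Rnot_lt_le. intro Hlt. apply Hn. eauto. }
  destruct (choice _ Hfar) as [u Hu].
  destruct (hX u) as [phi [l [Hphi Hconv]]].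
  destruct (Hconv 1 Rlt_0_1) as [N HN].
  destruct (INR_unbounded (mdist X x0 l + 1)) as [k Hk].
  set (n := Nat.max N k).
  specialize (HN n (Nat.le_max_l _ _)).
  pose proof (Hu (phi n)).
  assert (INR k <= INR (phi n)).
  { apply le_INR. pose proof (strictly_increasing_ge phi Hphi n). unfold n in *. lia. }
  pose proof (Defs.dist_tri X x0 l (u (phi n))). rewrite (Defs.dist_sym X l) in *. lra.
Qed.

(* Glue [X] and [Y] at distance 1 between the base points. *)
Lemma GH_admissible_bounded (X Y : MetricSpace) (x0 : X) (y0 : Y) (MX MY : R) :
  (forall x, mdist X x0 x <= MX) -> (forall y, mdist Y y0 y <= MY) ->
  GH_admissible (mdist X) (mdist Y) (MX + 1 + MY).
Proof.
  intros HMX HMY.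
  set (c := fun x y => mdist X x x0 + 1 + mdist Y y0 y).
  assert (c_pos : forall x y, 0 < c x y).
  { intros x y. pose proof (dist_nonneg X x x0). pose proof (dist_nonneg Y y0 y).
    unfold c. lra. }
  assert (c_left : forall x x' y, c x y <= mdist X x x' + c x' y).
  { intros x x' y. pose proof (Defs.dist_tri X x x' x0). unfold c. lra. }
  assert (c_right : forall x y y', c x y <= c x y' + mdist Y y' y).
  { intros x y y'. pose proof (Defs.dist_tri Y y0 y' y). unfold c. lra. }
  assert (dist_left : forall x x' y, mdist X x x' <= c x y + c x' y).
  { intros x x' y. pose proof (Defs.dist_tri X x x0 x'). pose proof (dist_nonneg Y y0 y).
    rewrite (Defs.dist_sym X x0 x') in *. unfold c. lra. }
  assert (dist_right : forall x y y', mdist Y y y' <= c x y + c x y').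
  { intros x y y'. pose proof (Defs.dist_tri Y y y0 y'). pose proof (dist_nonneg X x x0).
    rewrite (Defs.dist_sym Y y y0) in *. unfold c. lra. }
  exists (sum_metric X Y c c_pos c_left c_right dist_left dist_right), inl, inr.
  split; [intros ? ?; reflexivity | split; [intros ? ?; reflexivity |]].
  apply (sum_metric_hausdorff X Y c c_pos c_left c_right dist_left dist_right x0).
  - intro x. exists y0. pose proof (HMX x). pose proof (HMY y0).
    unfold c. rewrite (Defs.dist_sym X x x0), mdist_self in *. lra.
  - intro y. exists x0. pose proof (HMX x0). pose proof (HMY y).
    unfold c. rewrite mdist_self in *. lra.
Qed.

Theorem mainTheorem7 (X Y : MetricSpace) (x0 : X) (y0 : Y)
  (hX : compact_space X) (hY : compact_space Y) :
  exists gH g,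
    GH_dist_is (Hdist X) (Hdist Y) gH /\
    GH_dist_is (mdist X) (mdist Y) g /\
    gH <= g.
Proof.
  destruct (compact_bounded X x0 hX) as [MX HMX].
  destruct (compact_bounded Y y0 hY) as [MY HMY].
  pose proof (GH_admissible_bounded X Y x0 y0 MX MY HMX HMY) as Hadm.
  destruct (GH_dist_exists _ _ _ Hadm) as [g Hg].
  destruct (GH_dist_exists _ _ _ (GH_admissible_hyperspace X Y _ 1 Hadm Rlt_0_1))
    as [gH HgH].
  exists gH, g. split; [|split]; auto.
  apply (GH_dist_le (mdist X) (mdist Y) (Hdist X) (Hdist Y)); auto.
  intros r e Hr He. now apply GH_admissible_hyperspace.
Qed.
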